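(* For any $0 \le \alpha \le \beta \le 1$ and $p \in [0,1]$, $$p\,|p - \alpha| + (1-p)\,|p - \beta| \le 2\left[\,\left|p(1-\alpha) - (1-p)\beta\right| + (\beta - \alpha)\min\{p(1-\alpha), (1-p)\beta\}\right].$$ *)

From Stdlib Require Import Reals.

From Stdlib Require Import Reals Lra Psatz.
Open Scope R_scope.

(* Write a = p(1 - alpha), b = (1 - p) beta, D = a - b and d = beta - alpha.  Then
   p - alpha = D + (1 - p) d and p - beta = D - p d.  The substitution
   (alpha, beta, p) |-> (1 - beta, 1 - alpha, 1 - p) swaps a and b and leaves both
   sides unchanged, so we may assume D >= 0, where the right-hand side is 2 (D + d b).
   Then p - alpha >= 0; if p >= beta the left-hand side collapses to D, and otherwise
   it is (2p - 1) D + 2 p (1 - p) d, which is at most 2 D + 2 d b because p < beta. *)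

Definition weighted_dev (alpha beta p : R) : R :=
  p * Rabs (p - alpha) + (1 - p) * Rabs (p - beta).

Definition gap (alpha beta p : R) : R := p * (1 - alpha) - (1 - p) * beta.

Definition gap_bound (alpha beta p : R) : R :=
  2 * (Rabs (gap alpha beta p)
       + (beta - alpha) * Rmin (p * (1 - alpha)) ((1 - p) * beta)).

Lemma weighted_dev_flip (alpha beta p : R) :
  weighted_dev (1 - beta) (1 - alpha) (1 - p) = weighted_dev alpha beta p.
Proof.
  unfold weighted_dev.
  replace (1 - p - (1 - beta)) with (- (p - beta)) by ring.
  replace (1 - p - (1 - alpha)) with (- (p - alpha)) by ring.
  rewrite !Rabs_Ropp; ring.
Qed.

Lemma gap_flip (alpha beta p : R) :
  gap (1 - beta) (1 - alpha) (1 - p) = - gap alpha beta p.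
Proof. unfold gap; ring. Qed.

Lemma gap_bound_flip (alpha beta p : R) :
  gap_bound (1 - beta) (1 - alpha) (1 - p) = gap_bound alpha beta p.
Proof.
  unfold gap_bound; rewrite gap_flip, Rabs_Ropp, Rmin_comm.
  replace (1 - alpha - (1 - beta)) with (beta - alpha) by ring.
  replace (1 - (1 - p)) with p by ring.
  replace (1 - (1 - beta)) with beta by ring.
  reflexivity.
Qed.

Lemma gap_bound_of_gap_ge0 (alpha beta p : R) :
  0 <= gap alpha beta p ->
  gap_bound alpha beta p = 2 * (gap alpha beta p + (beta - alpha) * ((1 - p) * beta)).
Proof.
  intro HD; unfold gap_bound.
  rewrite Rabs_right, Rmin_right; unfold gap in *; lra.
Qed.

Lemma weighted_dev_le_gap_bound_of_gap_ge0 (alpha beta p : R) :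
  0 <= alpha -> alpha <= beta -> 0 <= p -> p <= 1 ->
  0 <= gap alpha beta p -> weighted_dev alpha beta p <= gap_bound alpha beta p.
Proof.
  intros Ha0 Hab Hp0 Hp1 HD.
  rewrite gap_bound_of_gap_ge0 by exact HD.
  unfold gap in *; unfold weighted_dev.
  assert (Hd : 0 <= beta - alpha) by lra.
  assert (Hpa : 0 <= p - alpha) by nra.
  rewrite (Rabs_right (p - alpha)) by lra.
  destruct (Rle_or_lt beta p) as [Hbp | Hpb].
  - rewrite (Rabs_right (p - beta)) by lra.
    assert (0 <= (beta - alpha) * ((1 - p) * beta)) by (apply Rmult_le_pos; nra).
    nra.
  - rewrite (Rabs_left (p - beta)) by lra.
    assert (p * (1 - p) * (beta - alpha) <= (1 - p) * beta * (beta - alpha)).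
    { apply Rmult_le_compat_r; nra. }
    nra.
Qed.

Theorem lemma16 (alpha beta p : R)
  (Ha0 : 0 <= alpha) (Hab : alpha <= beta) (Hb1 : beta <= 1)
  (Hp0 : 0 <= p) (Hp1 : p <= 1) :
  p * Rabs (p - alpha) + (1 - p) * Rabs (p - beta) <=
  2 * (Rabs (p * (1 - alpha) - (1 - p) * beta)
       + (beta - alpha) * Rmin (p * (1 - alpha)) ((1 - p) * beta)).
Proof.
  change (weighted_dev alpha beta p <= gap_bound alpha beta p).
  destruct (Rle_or_lt 0 (gap alpha beta p)) as [HD | HD].
  - now apply weighted_dev_le_gap_bound_of_gap_ge0.
  - rewrite <- weighted_dev_flip, <- gap_bound_flip.
    apply weighted_dev_le_gap_bound_of_gap_ge0; try lra.
    rewrite gap_flip; lra.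
Qed.
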